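(* Let $C\in O_A^+(\mathbb{Z})$, $c_1,c_2\in\overline C_Q$ and $(z,\tau)\in D(c_1)\cap D(c_2)$. Then $C\cdot C_Q=C_Q$, $C\cdot S_Q=S_Q$, $(Cz,\tau)\in D(Cc_1)\cap D(Cc_2)$, and $$\theta^{Cc_1,Cc_2}(Cz;\tau)=\theta^{c_1,c_2}(z;\tau).$$
   Context: $A$ is a nondegenerate symmetric $r\times r$ integer matrix, $Q(x)=\frac12\langle x,Ax\rangle$, $B(x,y)=\langle x,Ay\rangle$, $Q$ of type $(r-1,1)$. Fix $c_0$ with $Q(c_0)<0$; $C_Q=\{c\in\mathbb{R}^r:Q(c)<0,B(c,c_0)<0\}$, $S_Q=\{c\in\mathbb{Z}^r\text{ primitive}:Q(c)=0,B(c,c_0)<0\}$, $\overline C_Q=C_Q\cup S_Q$. $O_A^+(\mathbb{R})=\{C\in\mathrm{GL}_r(\mathbb{R}):C^tAC=A,\ B(Cc,c)<0\ \forall c\in C_Q\}$, $O_A^+(\mathbb{Z})=O_A^+(\mathbb{R})\cap\mathrm{GL}_r(\mathbb{Z})$. $R(c)=\mathbb{R}^r$ for $c\in C_Q$, $R(c)=\{a:B(c,a)\notin\mathbb{Z}\}$ for $c\in S_Q$; $D(c)=\{(z,\tau)\in\mathbb{C}^r\times\mathbb{H}:\operatorname{Im}z/\operatorname{Im}\tau\in R(c)\}$. With $y=\operatorname{Im}\tau$, $E(z)=2\int_0^ze^{-\pi t^2}dt$: $\rho^c(\nu;\tau)=E(\frac{B(c,\nu)}{\sqrt{-Q(c)}}y^{1/2})$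 for $c\in C_Q$, $\operatorname{sign}(B(c,\nu))$ for $c\in S_Q$; $\rho^{c_1,c_2}=\rho^{c_1}-\rho^{c_2}$; $\theta^{c_1,c_2}(z;\tau)=\sum_{n\in\mathbb{Z}^r}\rho^{c_1,c_2}(n+a;\tau)e^{2\pi iQ(n)\tau+2\pi iB(n,z)}$ with $a=\operatorname{Im}z/\operatorname{Im}\tau$. *)

From HB Require Import structures.
From mathcomp Require Import all_boot all_order all_algebra.
From mathcomp Require Import complex Rstruct.
From Stdlib Require Import Reals ClassicalEpsilon.
From Coquelicot Require Hierarchy RInt.
Set Implicit Arguments. Unset Strict Implicit. Unset Printing Implicit Defensive.
Import Order.TTheory GRing.Theory Num.Theory.
Local Open Scope ring_scope.

Notation Cx := (R[i]).

Definition intR (x : int) : R := x%:~R.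
Definition intC (x : int) : Cx := x%:~R.
Definition realC (x : R) : Cx := (x +i* 0)%C.

Definition AR r (A : 'M[int]_r) : 'M[R]_r := map_mx intR A.
Definition Bf r (A : 'M[int]_r) (x y : 'cV[R]_r) : R := (x^T *m AR A *m y) 0 0.
Definition Qf r (A : 'M[int]_r) (x : 'cV[R]_r) : R := Bf A x x / 2.

Definition type_r1_1 r (A : 'M[int]_r) : Prop :=
  exists P : 'M[R]_r, P \in unitmx /\
    P^T *m AR A *m P = diag_mx (\row_(i < r) if (i : nat) == r.-1 then -1 else 1).

Definition CQ r (A : 'M[int]_r) (c0 c : 'cV[R]_r) : Prop :=
  Qf A c < 0 /\ Bf A c c0 < 0.

Definition primitive r (m : 'cV[int]_r) : Prop :=
  forall d : int, (forall i, m i 0 \in dvdz d) -> d = 1 \/ d = -1.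

Definition SQ r (A : 'M[int]_r) (c0 : 'cV[R]_r) (m : 'cV[int]_r) : Prop :=
  primitive m /\ Qf A (map_mx intR m) = 0 /\ Bf A (map_mx intR m) c0 < 0.

Definition CQbar r (A : 'M[int]_r) (c0 c : 'cV[R]_r) : Prop :=
  CQ A c0 c \/ exists m, SQ A c0 m /\ c = map_mx intR m.

Definition OAplusR r (A : 'M[int]_r) (c0 : 'cV[R]_r) (C : 'M[R]_r) : Prop :=
  C \in unitmx /\ C^T *m AR A *m C = AR A /\
  forall c, CQ A c0 c -> Bf A (C *m c) c < 0.
Definition OAplusZ r (A : 'M[int]_r) (c0 : 'cV[R]_r) (C : 'M[int]_r) : Prop :=
  OAplusR A c0 (map_mx intR C) /\ C \in unitmx.

Definition avec r (z : 'cV[Cx]_r) (tau : Cx) : 'cV[R]_r :=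
  map_mx (fun w : Cx => complex.Im w / complex.Im tau) z.

Definition Rset r (A : 'M[int]_r) (c0 c a : 'cV[R]_r) : Prop :=
  CQ A c0 c \/
  ((exists m, SQ A c0 m /\ c = map_mx intR m) /\ ~ (exists k : int, Bf A c a = intR k)).
Definition Dset r (A : 'M[int]_r) (c0 c : 'cV[R]_r) (z : 'cV[Cx]_r) (tau : Cx) : Prop :=
  0 < complex.Im tau /\ Rset A c0 c (avec z tau).

Definition Eerf (x : R) : R :=
  (2 * RInt.RInt (V := Hierarchy.R_CompleteNormedModule) (fun t => exp (- PI * (t * t))) 0 x)%R.

Definition rho r (A : 'M[int]_r) (c0 c nu : 'cV[R]_r) (tau : Cx) : R :=
  if excluded_middle_informative (CQ A c0 c) then
    Eerf (Bf A c nu / sqrt (- Qf A c) * sqrt (complex.Im tau))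
  else Num.sg (Bf A c nu).

Definition cexp (w : Cx) : Cx :=
  ((exp (complex.Re w) * cos (complex.Im w)) +i* (exp (complex.Re w) * sin (complex.Im w)))%C.

Definition twopii : Cx := (0 +i* (2 * PI))%C.

Definition BnC r (A : 'M[int]_r) (n : 'cV[int]_r) (z : 'cV[Cx]_r) : Cx :=
  ((map_mx intC n)^T *m map_mx intC A *m z) 0 0.

Definition theta_term r (A : 'M[int]_r) (c0 c1 c2 : 'cV[R]_r) (z : 'cV[Cx]_r) (tau : Cx)
  (n : 'cV[int]_r) : Cx :=
  let nu := map_mx intR n + avec z tau in
  realC (rho A c0 c1 nu tau - rho A c0 c2 nu tau) *
  cexp (twopii * realC (Qf A (map_mx intR n)) * tau + twopii * BnC A n z).

(* unordered (net) summation over Z^r *)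
Definition HasSum r (f : 'cV[int]_r -> Cx) (s : Cx) : Prop :=
  forall eps : R, 0 < eps -> exists F0 : seq 'cV[int]_r,
    forall F : seq 'cV[int]_r, uniq F -> {subset F0 <= F} ->
      `|\sum_(n <- F) f n - s| < realC eps.

Definition SumZr r (f : 'cV[int]_r -> Cx) : Cx :=
  epsilon (inhabits 0) (fun s => HasSum f s).

Definition theta r (A : 'M[int]_r) (c0 c1 c2 : 'cV[R]_r) (z : 'cV[Cx]_r) (tau : Cx) : Cx :=
  SumZr (theta_term A c0 c1 c2 z tau).

From Pilot Require Import Defs.
From HB Require Import structures.
From mathcomp Require Import all_boot all_order all_algebra.
From mathcomp Require Import complex Rstruct.
From Stdlib Require Import Reals FunctionalExtensionality PropExtensionality.
From Stdlib Require Import ClassicalEpsilon.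
From mathcomp Require Import ring lra.
Import Order.TTheory GRing.Theory Num.Theory.
Local Open Scope ring_scope.
Set Implicit Arguments. Unset Strict Implicit. Unset Printing Implicit Defensive.

(* Since Q has signature (r-1,1), the B-orthogonal complement of a timelike
   vector is positive definite.  This gives the reverse Cauchy-Schwarz
   inequality B(x,x) B(y,y) <= B(x,y)^2 for timelike y, and with it the
   transitivity of "B(x,y) < 0" among timelike vectors.  Hence the time
   orientation condition defining O_A^+ makes an isometry C, and also its
   inverse, map the cone C_Q into itself, and a limiting argument extends
   this to the null vectors of S_Q; C^{-1} is integral, so primitivity is
   preserved as well.  Finally rho^{Cc}(C nu) = rho^c(nu), so the summand of
   theta^{Cc_1,Cc_2}(Cz) at Cn is the summand of theta^{c_1,c_2}(z) at n, and
   n |-> Cn is a bijection of Z^r. *)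

Section BilinearForm.
Variables (r : nat) (A : 'M[int]_r).

Lemma BfDl x y z : Bf A (x + y) z = Bf A x z + Bf A y z.
Proof. by rewrite /Bf raddfD /= !mulmxDl mxE. Qed.

Lemma BfDr x y z : Bf A z (x + y) = Bf A z x + Bf A z y.
Proof. by rewrite /Bf !mulmxDr mxE. Qed.

Lemma BfZl a x z : Bf A (a *: x) z = a * Bf A x z.
Proof. by rewrite /Bf linearZ /= -!scalemxAl mxE. Qed.

Lemma BfZr a x z : Bf A z (a *: x) = a * Bf A z x.
Proof. by rewrite /Bf -!scalemxAr mxE. Qed.

Lemma BfNl x z : Bf A (- x) z = - Bf A x z.
Proof. by rewrite -scaleN1r BfZl mulN1r. Qed.

Lemma BfNr x z : Bf A z (- x) = - Bf A z x.
Proof. by rewrite -scaleN1r BfZr mulN1r. Qed.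

Lemma BfC x y : A^T = A -> Bf A x y = Bf A y x.
Proof.
move=> hA; rewrite /Bf.
transitivity ((x^T *m AR A *m y)^T 0 0); first by rewrite [RHS]mxE.
by rewrite !trmx_mul trmxK mulmxA /AR map_trmx hA.
Qed.

(* The numeral 2 in Qf is Stdlib's IZR 2, hence Rlt_0_2. *)
Let inv2_gt0 : 0 < (2 : R)^-1.
Proof. by rewrite invr_gt0; apply/RltP; exact: Rlt_0_2. Qed.

Lemma Qf_lt0 x : (Qf A x < 0) = (Bf A x x < 0).
Proof. by rewrite /Qf pmulr_llt0. Qed.

Lemma Qf_eq0 x : (Qf A x == 0) = (Bf A x x == 0).
Proof. by rewrite /Qf mulf_eq0 (negbTE (lt0r_neq0 inv2_gt0)) orbF. Qed.

Definition form_isometry (G : 'M[R]_r) := G^T *m AR A *m G = AR A.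

Lemma Bf_isometry G x y : form_isometry G -> Bf A (G *m x) (G *m y) = Bf A x y.
Proof. by move=> hG; rewrite /Bf trmx_mul -[in RHS]hG !mulmxA. Qed.

Lemma Qf_isometry G x : form_isometry G -> Qf A (G *m x) = Qf A x.
Proof. by move=> hG; rewrite /Qf Bf_isometry. Qed.

Lemma form_isometryV G G' : G *m G' = 1%:M -> form_isometry G -> form_isometry G'.
Proof.
rewrite /form_isometry => hGG' hG.
by rewrite -{1}hG !mulmxA -trmx_mul -!mulmxA hGG' mulmx1 trmx1 mul1mx.
Qed.

End BilinearForm.

Section Minkowski.
Variable n : nat.

Definition spatial_dot (u v : 'cV[R]_n.+1) : R :=
  \sum_(i < n) u (widen_ord (leqnSn n) i) 0 * v (widen_ord (leqnSn n) i) 0.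

Lemma diag_minkowskiE (u v : 'cV[R]_n.+1) :
  (u^T *m diag_mx (\row_(i < n.+1) if (i : nat) == n.+1.-1 then -1 else 1) *m v) 0 0
  = spatial_dot u v - u ord_max 0 * v ord_max 0.
Proof.
rewrite mul_mx_diag mxE big_ord_recr /= !mxE eqxx /spatial_dot.
congr (_ + _); last by ring.
by apply: eq_bigr => i _; rewrite !mxE /= ltn_eqF ?ltn_ord //; ring.
Qed.

Lemma spatial_dot_ge0 u : 0 <= spatial_dot u u.
Proof. by apply: sumr_ge0 => i _; rewrite -expr2 sqr_ge0. Qed.

Lemma spatial_dot_eq0 u : spatial_dot u u = 0 -> u ord_max 0 = 0 -> u = 0.
Proof.
move=> /eqP; rewrite psumr_eq0 => [/allP uw0 un0|i _]; last by rewrite -expr2 sqr_ge0.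
apply/matrixP => i j; rewrite ord1 mxE; have [k ->|->] := unliftP ord_max i => //.
have := uw0 k (mem_index_enum _); rewrite mulf_eq0 orbb => /eqP.
by rewrite (_ : widen_ord _ k = lift ord_max k) //; exact/val_inj/esym/lift_max.
Qed.

Lemma spatial_dot_lagrange (u v : 'cV[R]_n.+1) p q :
  \sum_(i < n) (p * u (widen_ord (leqnSn n) i) 0 - q * v (widen_ord (leqnSn n) i) 0) ^+ 2
  = p ^+ 2 * spatial_dot u u - 2 * p * q * spatial_dot u v + q ^+ 2 * spatial_dot v v.
Proof.
rewrite /spatial_dot !mulr_sumr -sumrB -big_split /=.
by apply: eq_bigr => i _; ring.
Qed.

Lemma minkowski_orthogonal_timelike u v :
  spatial_dot v v - v ord_max 0 * v ord_max 0 < 0 ->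
  spatial_dot u v - u ord_max 0 * v ord_max 0 = 0 ->
  0 <= spatial_dot u u - u ord_max 0 * u ord_max 0 /\
  (spatial_dot u u - u ord_max 0 * u ord_max 0 = 0 -> u = 0).
Proof.
move=> hv huv; have Hv := spatial_dot_ge0 v.
have L0 : 0 <= \sum_(i < n) (v ord_max 0 * u (widen_ord (leqnSn n) i) 0
                             - u ord_max 0 * v (widen_ord (leqnSn n) i) 0) ^+ 2.
  by apply: sumr_ge0 => i _; rewrite sqr_ge0.
have key : u ord_max 0 ^+ 2 * (v ord_max 0 ^+ 2 - spatial_dot v v)
           <= v ord_max 0 ^+ 2 * (spatial_dot u u - u ord_max 0 * u ord_max 0).
  have uv : spatial_dot u v = u ord_max 0 * v ord_max 0 by apply/eqP; rewrite -subr_eq0 huv.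
  rewrite spatial_dot_lagrange uv in L0; rewrite -subr_ge0.
  by rewrite (_ : _ - _ = v ord_max 0 ^+ 2 * spatial_dot u u
    - 2 * v ord_max 0 * u ord_max 0 * (u ord_max 0 * v ord_max 0)
    + u ord_max 0 ^+ 2 * spatial_dot v v) //; ring.
have hb : 0 < v ord_max 0 ^+ 2 by rewrite expr2; lra.
have hvt : 0 < v ord_max 0 ^+ 2 - spatial_dot v v by rewrite expr2; lra.
split.
  rewrite -(pmulr_rge0 _ hb); apply: le_trans key.
  by apply: mulr_ge0; rewrite ?sqr_ge0 ?ltW.
move=> h0; have un0 : u ord_max 0 = 0.
  apply/eqP; rewrite -sqrf_eq0 eq_le sqr_ge0 andbT.
  by rewrite -(pmulr_lle0 _ hvt) (le_trans key) // h0 mulr0.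
by apply: spatial_dot_eq0 => //; move: h0; rewrite un0 mulr0 subr0.
Qed.

End Minkowski.

Section Signature.
Variables (r : nat) (A : 'M[int]_r).
Hypothesis htype : type_r1_1 A.

Lemma Bf_orthogonal_timelike y w : Bf A y y < 0 -> Bf A w y = 0 ->
  0 <= Bf A w w /\ (Bf A w w = 0 -> w = 0).
Proof.
case: r A htype y w => [|n] A' [P [hP hD]] y w hy hwy.
  by move: hy; rewrite /Bf mxE big_ord0 ltxx.
have BfPE a b : Bf A' (P *m a) (P *m b) =
    spatial_dot a b - a ord_max 0 * b ord_max 0.
  by rewrite -diag_minkowskiE -hD /Bf trmx_mul !mulmxA.
rewrite -(mulKVmx hP w) -(mulKVmx hP y) !BfPE in hy hwy *.
have [-> h0] := minkowski_orthogonal_timelike hy hwy.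
by split => // /h0 ->; rewrite mulmx0.
Qed.

Hypothesis hAsym : A^T = A.

Lemma Bf_reverse_CauchySchwarz x y : Bf A y y < 0 ->
  Bf A x x * Bf A y y <= Bf A x y ^+ 2.
Proof.
move=> hy; have hy0 : Bf A y y != 0 by rewrite lt_eqF.
have e : Bf A x y / Bf A y y * Bf A y y = Bf A x y by rewrite divfK.
have hw : Bf A (x - (Bf A x y / Bf A y y) *: y) y = 0 by rewrite BfDl BfNl BfZl e subrr.
have [+ _] := Bf_orthogonal_timelike hy hw.
rewrite !(BfDl, BfDr, BfNl, BfNr, BfZl, BfZr) (BfC y x hAsym); nra.
Qed.

(* B(x,y) < 0 is the relation "x and y lie in the same half of the light cone" *)
Lemma Bf_timelike_trans x y z :
  Bf A x x < 0 -> Bf A y y < 0 -> Bf A z z < 0 ->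
  Bf A x y < 0 -> Bf A y z < 0 -> Bf A x z < 0.
Proof.
move=> hx hy hz hxy hyz; rewrite ltNge; apply/negP => hxz.
pose w := (- Bf A y z) *: x + Bf A x z *: y.
have hwz : Bf A z w = 0 by rewrite BfC // /w BfDl !BfZl; ring.
have hww : Bf A w w < 0.
  have e1 : 0 < (- Bf A y z) * (- Bf A y z) by apply: mulr_gt0; lra.
  have e2 : 0 <= (- Bf A y z) * Bf A x z by apply: mulr_ge0; lra.
  have e3 : 0 <= Bf A x z * Bf A x z by apply: mulr_ge0.
  rewrite /w !(BfDl, BfDr, BfNl, BfNr, BfZl, BfZr) (BfC y x hAsym); nra.
have := Bf_reverse_CauchySchwarz z hww; rewrite hwz; nra.
Qed.

End Signature.

Section TimeCone.
Variables (r : nat) (A : 'M[int]_r) (c0 : 'cV[R]_r).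
Hypotheses (hAsym : A^T = A) (htype : type_r1_1 A) (hc0 : Qf A c0 < 0).

Let Bc0c0 : Bf A c0 c0 < 0.
Proof. by rewrite -Qf_lt0. Qed.

Lemma CQ_timelike c : Bf A c c < 0 -> CQ A c0 c \/ CQ A c0 (- c).
Proof.
move=> hc; rewrite /CQ !Qf_lt0 !BfNl BfNr opprK oppr_lt0.
case: (ltgtP (Bf A c c0) 0) => h; [by left | by right | ].
by have [+ _] := Bf_orthogonal_timelike htype Bc0c0 h; lra.
Qed.

Definition orthochronous (G : 'M[R]_r) := forall c, CQ A c0 c -> Bf A (G *m c) c < 0.

Section Orthochronous.
Variable G : 'M[R]_r.
Hypotheses (hGu : G \in unitmx) (hG : form_isometry A G) (hGpos : orthochronous G).

Lemma orthochronous_timelike c : Bf A c c < 0 -> Bf A (G *m c) c < 0.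
Proof.
case/CQ_timelike => /hGpos //.
by rewrite mulmxN BfNl BfNr opprK.
Qed.

Lemma CQ_isometry c : CQ A c0 c -> CQ A c0 (G *m c).
Proof.
move=> [Qc Bcc0]; have Gcc := hGpos (conj Qc Bcc0).
rewrite Qf_lt0 in Qc; split; first by rewrite Qf_lt0 Bf_isometry.
by apply: (Bf_timelike_trans htype hAsym (y := c)); rewrite ?Bf_isometry.
Qed.

(* x + e c0 lies in C_Q for every e > 0; let e tend to 0 *)
Lemma null_isometry_future x : x != 0 -> Bf A x x = 0 -> Bf A x c0 < 0 ->
  Bf A (G *m x) c0 < 0.
Proof.
move=> x0 hxx hxc.
have [_ hk] := CQ_isometry (conj hc0 Bc0c0).
have perturb e : 0 < e -> Bf A (G *m x) c0 + e * Bf A (G *m c0) c0 < 0.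
  move=> he; have ec0 : e * Bf A c0 c0 < 0 by rewrite pmulr_rlt0.
  have hQ : CQ A c0 (x + e *: c0).
    split; last by rewrite BfDl BfZl; lra.
    rewrite Qf_lt0 !(BfDl, BfDr, BfZl, BfZr) (BfC c0 x hAsym) hxx.
    have h1 : e * (e * Bf A c0 c0) < 0 by rewrite pmulr_rlt0.
    have h2 : e * Bf A x c0 < 0 by rewrite pmulr_rlt0.
    lra.
  have [_] := CQ_isometry hQ.
  by rewrite mulmxDr -scalemxAr BfDl BfZl.
case: (ltgtP (Bf A (G *m x) c0) 0) => // h.
  have he : 0 < Bf A (G *m x) c0 / - Bf A (G *m c0) c0 by apply: divr_gt0; lra.
  by have := perturb _ he; rewrite invrN mulrN mulNr divfK ?lt_eqF // subrr ltxx.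
have [_ Gx0] := Bf_orthogonal_timelike htype Bc0c0 h.
by move: x0; rewrite -(mulKmx hGu x) Gx0 ?Bf_isometry // mulmx0 eqxx.
Qed.

End Orthochronous.

Lemma orthochronousV G G' : G *m G' = 1%:M -> form_isometry A G ->
  orthochronous G -> orthochronous G'.
Proof.
move=> GG' hG hGpos c [Qc _].
have -> : Bf A (G' *m c) c = Bf A (G *m (G' *m c)) (G' *m c).
  by rewrite mulmxA GG' mul1mx BfC.
apply: orthochronous_timelike => //.
by rewrite -(Bf_isometry _ _ hG) mulmxA GG' mul1mx -Qf_lt0.
Qed.

End TimeCone.

Lemma map_intR_inj m n : injective (map_mx intR : 'M[int]_(m, n) -> 'M[R]_(m, n)).
Proof.
by move=> M N /matrixP h; apply/matrixP => i j; have := h i j; rewrite !mxE => /intr_inj.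
Qed.

Lemma map_intR_mulmx m n p (M : 'M[int]_(m, n)) (N : 'M[int]_(n, p)) :
  map_mx intR (M *m N) = map_mx intR M *m map_mx intR N.
Proof. exact: map_mxM. Qed.

Lemma map_intR_mul1 r (M M' : 'M[int]_r) :
  M *m M' = 1%:M -> map_mx intR M *m map_mx intR M' = 1%:M.
Proof. by move=> h; rewrite -map_intR_mulmx h /intR map_mx1. Qed.

Lemma form_isometry_int r (A C : 'M[int]_r) :
  form_isometry A (map_mx intR C) -> C^T *m A *m C = A.
Proof. by move=> hC; apply: map_intR_inj; rewrite !map_intR_mulmx -map_trmx. Qed.

Lemma primitive_mul r (M M' : 'M[int]_r) m :
  M' *m M = 1%:M -> Defs.primitive m -> Defs.primitive (M *m m).
Proof.
move=> hM hm d hd; apply: hm => i.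
rewrite -[m]mul1mx -hM -mulmxA mxE.
by apply: rpred_sum => j _; apply: dvdz_mull.
Qed.

Lemma primitive_neq0 r (m : 'cV[int]_r) : Defs.primitive m -> map_mx intR m != 0.
Proof.
move=> hm; apply/eqP => m0.
have mi0 i : m i 0 = 0.
  by apply: (@intr_inj R); have := congr1 (fun M : 'cV[R]_r => M i 0) m0; rewrite !mxE.
by case: (hm 2) => // i; rewrite mi0 dvdz0.
Qed.

Lemma Im_sum (I : Type) (s : seq I) (F : I -> Cx) :
  complex.Im (\sum_(i <- s) F i) = \sum_(i <- s) complex.Im (F i).
Proof. by apply: (big_morph (@complex.Im R) (id1 := 0) (op1 := +%R)) => // [[a b] [c d]]. Qed.

Lemma Im_intC_mul k (w : Cx) : complex.Im (intC k * w) = intR k * complex.Im w.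
Proof.
have -> : intC k = (intR k)%:C%C by rewrite /intC /intR rmorph_int.
by case: w => a b /=; ring.
Qed.

Lemma avec_mul r (C : 'M[int]_r) z tau :
  avec (map_mx intC C *m z) tau = map_mx intR C *m avec z tau.
Proof.
apply/matrixP => i j; rewrite !mxE Im_sum mulr_suml.
by apply: eq_bigr => k _; rewrite !mxE Im_intC_mul mulrA.
Qed.

Lemma map_intC_mulmx m n p (M : 'M[int]_(m, n)) (N : 'M[int]_(n, p)) :
  map_mx intC (M *m N) = map_mx intC M *m map_mx intC N.
Proof. exact: map_mxM. Qed.

Lemma BnC_mul r (A C : 'M[int]_r) n z : C^T *m A *m C = A ->
  BnC A (C *m n) (map_mx intC C *m z) = BnC A n z.
Proof.
move=> hC; rewrite /BnC -[in RHS]hC !map_intC_mulmx trmx_mul !map_trmx !mulmxA.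
by []. Qed.

Lemma rho_isometry r (A : 'M[int]_r) c0 G c nu tau :
  form_isometry A G -> (CQ A c0 (G *m c) <-> CQ A c0 c) ->
  rho A c0 (G *m c) (G *m nu) tau = rho A c0 c nu tau.
Proof.
move=> hG hCQ; rewrite /rho Bf_isometry // Qf_isometry //.
case: excluded_middle_informative => h1; case: excluded_middle_informative => h2 //.
- by case: h2; apply/hCQ.
- by case: h1; apply/hCQ.
Qed.

Lemma theta_term_mul r (A : 'M[int]_r) c0 C c1 c2 z tau n :
  form_isometry A (map_mx intR C) ->
  (forall c, CQ A c0 (map_mx intR C *m c) <-> CQ A c0 c) ->
  theta_term A c0 (map_mx intR C *m c1) (map_mx intR C *m c2) (map_mx intC C *m z) tau
    (C *m n) = theta_term A c0 c1 c2 z tau n.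
Proof.
move=> hC hCQ; rewrite /theta_term map_intR_mulmx avec_mul -mulmxDr.
by rewrite !rho_isometry // Qf_isometry // BnC_mul // form_isometry_int.
Qed.

Lemma HasSum_reindex r (f : 'cV[int]_r -> Cx) (h h' : 'cV[int]_r -> 'cV[int]_r) s :
  cancel h h' -> cancel h' h -> HasSum f s -> HasSum (fun n => f (h n)) s.
Proof.
move=> hK h'K hf e he; have [F0 hF0] := hf e he.
exists (map h' F0) => F uF F0F; rewrite -(big_map h xpredT f).
apply: hF0; first by rewrite (map_inj_uniq (can_inj hK)).
by move=> x xF0; rewrite -[x]h'K; apply/map_f/F0F/map_f.
Qed.

Lemma SumZr_reindex r (f : 'cV[int]_r -> Cx) (h h' : 'cV[int]_r -> 'cV[int]_r) :
  cancel h h' -> cancel h' h -> SumZr (fun n => f (h n)) = SumZr f.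
Proof.
move=> hK h'K; rewrite /SumZr; congr epsilon.
apply: functional_extensionality => s; apply: propositional_extensionality.
split; last exact: HasSum_reindex.
move=> hs; rewrite (_ : f = fun n => f (h (h' n))); first exact: HasSum_reindex hs.
by apply: functional_extensionality => x; rewrite h'K.
Qed.

Lemma theta_mul r (A : 'M[int]_r) c0 C C' c1 c2 z tau :
  C *m C' = 1%:M -> form_isometry A (map_mx intR C) ->
  (forall c, CQ A c0 (map_mx intR C *m c) <-> CQ A c0 c) ->
  theta A c0 (map_mx intR C *m c1) (map_mx intR C *m c2) (map_mx intC C *m z) tau
  = theta A c0 c1 c2 z tau.
Proof.
move=> hCC' hC hCQ; have hC'C := mulmx1C hCC'.
rewrite /theta -(SumZr_reindex _ (h := mulmx C) (h' := mulmx C')).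
- by congr SumZr; apply: functional_extensionality => n /=; rewrite theta_term_mul.
- by move=> n; rewrite mulmxA hC'C mul1mx.
- by move=> n; rewrite mulmxA hCC' mul1mx.
Qed.

Section IntegralIsometry.
Variables (r : nat) (A : 'M[int]_r) (c0 : 'cV[R]_r).
Hypotheses (hAsym : A^T = A) (htype : type_r1_1 A) (hc0 : Qf A c0 < 0).
Variables C C' : 'M[int]_r.
Hypotheses (hC'C : C' *m C = 1%:M) (hC : form_isometry A (map_mx intR C))
  (hCorth : orthochronous A c0 (map_mx intR C)).

Lemma integral_isometryV :
  form_isometry A (map_mx intR C') /\ orthochronous A c0 (map_mx intR C').
Proof.
have hCC' := map_intR_mul1 (mulmx1C hC'C).
by split; [apply: form_isometryV hCC' hC | apply: orthochronousV hCC' hC hCorth].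
Qed.

Lemma SQ_mul m : SQ A c0 m -> SQ A c0 (C *m m).
Proof.
have [_ CRu] := mulmx1_unit (map_intR_mul1 hC'C).
move=> [hm [Qm Bm]]; split; first exact: primitive_mul hC'C hm.
rewrite map_intR_mulmx Qf_isometry //; split => //.
apply: null_isometry_future => //; first exact: primitive_neq0.
by apply/eqP; rewrite -Qf_eq0 Qm.
Qed.

Lemma CQ_mulE c : CQ A c0 (map_mx intR C *m c) <-> CQ A c0 c.
Proof.
have [hC'iso hC'orth] := integral_isometryV.
split; last exact: CQ_isometry.
by move/(CQ_isometry hAsym htype hc0 hC'iso hC'orth); rewrite mulmxA map_intR_mul1 ?mul1mx.
Qed.

Lemma Dset_mul c z tau : Dset A c0 c z tau ->
  Dset A c0 (map_mx intR C *m c) (map_mx intC C *m z) tau.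
Proof.
move=> [hy [hc|[[m [hm ->]] hB]]]; split; rewrite // avec_mul; first by left; apply: CQ_isometry.
right; split; first by exists (C *m m); split; [exact: SQ_mul | rewrite map_intR_mulmx].
by rewrite Bf_isometry.
Qed.

End IntegralIsometry.

Unset Implicit Arguments.

Theorem proposition2p13 (r : nat) (A : 'M[int]_r) (c0 : 'cV[R]_r)
  (hAsym : A^T = A) (hAnd : \det A != 0) (htype : type_r1_1 A)
  (hc0 : Qf A c0 < 0)
  (C : 'M[int]_r) (hC : OAplusZ A c0 C)
  (c1 c2 : 'cV[R]_r) (hc1 : CQbar A c0 c1) (hc2 : CQbar A c0 c2)
  (z : 'cV[Cx]_r) (tau : Cx)
  (hz1 : Dset A c0 c1 z tau) (hz2 : Dset A c0 c2 z tau) :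
  let CR := map_mx intR C in
  let CC := map_mx intC C in
  ((forall c, CQ A c0 c -> CQ A c0 (CR *m c)) /\
   (forall c, CQ A c0 c -> exists c', CQ A c0 c' /\ c = CR *m c')) /\
  ((forall m, SQ A c0 m -> SQ A c0 (C *m m)) /\
   (forall m, SQ A c0 m -> exists m', SQ A c0 m' /\ m = C *m m')) /\
  (Dset A c0 (CR *m c1) (CC *m z) tau /\ Dset A c0 (CR *m c2) (CC *m z) tau) /\
  theta A c0 (CR *m c1) (CR *m c2) (CC *m z) tau = theta A c0 c1 c2 z tau.
Proof.
move=> CR CC; case: hC => [[_ [hCiso hCorth]] hCu].
pose C' := invmx C; have hCC' : C *m C' = 1%:M by rewrite mulmxV.
have hC'C : C' *m C = 1%:M by rewrite mulVmx.
have [hC'iso hC'orth] := integral_isometryV hAsym htype hc0 hC'C hCiso hCorth.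
have CQ_mulC := CQ_mulE hAsym htype hc0 hC'C hCiso hCorth.
split; [split | split; [split | split; [split | ]]].
- by move=> c hc; apply/CQ_mulC.
- move=> c hc; exists (map_mx intR C' *m c).
  by rewrite mulmxA map_intR_mul1 ?mul1mx //; split; first exact: CQ_isometry.
- exact: SQ_mul hC'C hCiso hCorth.
- move=> m hm; exists (C' *m m).
  rewrite mulmxA hCC' mul1mx; split => //.
  exact: (SQ_mul hAsym htype hc0 hCC' hC'iso hC'orth).
- exact: (Dset_mul hAsym htype hc0 hC'C).
- exact: (Dset_mul hAsym htype hc0 hC'C).
- exact: theta_mul hCC' hCiso CQ_mulC.
Qed.
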